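(* Let $G=(V,E)$ be a finite graph (parallel edges and loops allowed) and $e\neq f$ edges of $G$. In every monomial appearing in $\mathcal{M}_{ef}(1)$, and in every monomial appearing in $\sum_{\beta,\gamma}\mathbf{x}^{\beta}\mathbf{x}^{\gamma}\sum_{\mathbf{m}\in B_{\beta,\gamma}}\mathbf{m}$ (sum over ordered pairs of disjoint subsets $\beta,\gamma$ of $E\setminus\{e,f\}$), each variable $x_g$ has degree at most two.
   Context: Let $\{x_g : g\in E\}$ be variables. For $F\subseteq E$ write $\mathbf{x}^F=\prod_{g\in F}x_g$ and $k(F)$ for the number of connected components of $(V,F)$. For $A,B\subseteq E$ set $\mathcal{T}_A^B=\sum_{F\subseteq E:\,A\subseteq F,\,F\cap B=\varnothing}\mathbf{x}^F q^{k(F)}$; $\mathcal{T}_e^f=\mathcal{T}_{\{e\}}^{\{f\}}$, $\mathcal{T}_f^e=\mathcal{T}_{\{f\}}^{\{e\}}$, $\mathcal{T}_{ef}=\mathcal{T}_{\{e,f\}}^{\varnothing}$, $\mathcal{T}^{ef}=\mathcal{T}_{\varnothing}^{\{e,f\}}$, and $\mathcal{M}_{ef}(q)=(\mathcal{T}_e^f\mathcal{T}_f^e-\mathcal{T}_{ef}\mathcal{T}^{ef})/(x_ex_f(1-q))$, a polynomial. Let $E^{ef}=E\setminus\{e,f\}$. A subset $F\subseteq E^{ef}$ is a paracel if $k(F+e)=k(F+f)=k(F)-1$ and $(V,F+e)$, $(V,F+f)$ have the same connected components; an edge of $E^{ef}\setminus F$ is a smoot for paracel $F$ if it joins the same two components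 of $(V,F)$ as $e$ and $f$. For disjoint $\beta,\gamma\subseteq E^{ef}$, $A_{\beta,\gamma}$ is the set of $\alpha\subseteq E^{ef}$ disjoint from $\beta,\gamma$ with $\gamma\cup\alpha$ a paracel and every edge of $\beta$ a smoot for $\gamma\cup\alpha$; $\alpha,\alpha'\in A_{\beta,\gamma}$ are twins if $\alpha\cap\alpha'\in A_{\beta,\gamma}$; $B_{\beta,\gamma}$ is the set of distinct monomials $\mathbf{x}^{\alpha}\mathbf{x}^{\alpha'}$ with $\alpha,\alpha'$ twins. *)

From HB Require Import structures.
From mathcomp Require Import all_boot all_order all_algebra.
From mathcomp Require Import mpoly.
Set Implicit Arguments. Unset Strict Implicit. Unset Printing Implicit Defensive.
Import Order.TTheory GRing.Theory Num.Theory.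
Local Open Scope ring_scope.

(* A finite multigraph (loops, parallel edges allowed): vertex set V (a finType),
   edge set E = 'I_m, and ends g = the two endpoints of edge g. *)

Section Graph.
Variables (V : finType) (m : nat) (ends : 'I_m -> V * V).

Definition adjF (F : {set 'I_m}) : rel V :=
  fun u v => [exists g in F, (ends g == (u, v)) || (ends g == (v, u))].

Definition kcomp (F : {set 'I_m}) : nat := n_comp (adjF F) predT.

Definition xmon (F : {set 'I_m}) : {mpoly int[m]} := \prod_(g in F) 'X_g.

(* T_A^B, a polynomial in q (= 'X) with coefficients in Z[x_g : g in E] *)
Definition Tpoly (A B : {set 'I_m}) : {poly {mpoly int[m]}} :=
  \sum_(F : {set 'I_m} | (A \subset F) && [disjoint F & B])
     (xmon F)%:P * 'X ^+ kcomp F.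

Variables (e f : 'I_m).

(* numerator  T_e^f T_f^e - T_ef T^ef  of M_ef(q) *)
Definition Mnum : {poly {mpoly int[m]}} :=
  Tpoly [set e] [set f] * Tpoly [set f] [set e]
  - Tpoly [set e; f] set0 * Tpoly set0 [set e; f].

Definition Eef : {set 'I_m} := ~: [set e; f].

Definition paracel (F : {set 'I_m}) : bool :=
  [&& F \subset Eef,
      (kcomp (e |: F)).+1 == kcomp F,
      (kcomp (f |: F)).+1 == kcomp F &
      [forall u, forall v,
         connect (adjF (e |: F)) u v == connect (adjF (f |: F)) u v]].

Definition joins_same (F : {set 'I_m}) (g : 'I_m) : bool :=
  let c := connect (adjF F) in
  ((c (ends g).1 (ends e).1 && c (ends g).2 (ends e).2)
   || (c (ends g).1 (ends e).2 && c (ends g).2 (ends e).1))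
  && ((c (ends g).1 (ends f).1 && c (ends g).2 (ends f).2)
   || (c (ends g).1 (ends f).2 && c (ends g).2 (ends f).1)).

Definition smoot (F : {set 'I_m}) (g : 'I_m) : bool :=
  [&& g \in Eef, g \notin F & joins_same F g].

Definition inA (beta gamma alpha : {set 'I_m}) : bool :=
  [&& alpha \subset Eef, [disjoint alpha & beta], [disjoint alpha & gamma],
      paracel (gamma :|: alpha) &
      [forall g in beta, smoot (gamma :|: alpha) g]].

Definition twins (beta gamma alpha alpha' : {set 'I_m}) : bool :=
  [&& inA beta gamma alpha, inA beta gamma alpha' &
      inA beta gamma (alpha :&: alpha')].

Definition Bset (beta gamma : {set 'I_m}) : seq {mpoly int[m]} :=
  undup [seq xmon aa.1 * xmon aa.2 |
          aa <- enum [set aa : {set 'I_m} * {set 'I_m} |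
                        twins beta gamma aa.1 aa.2]].

Definition Bsum : {mpoly int[m]} :=
  \sum_(bg : {set 'I_m} * {set 'I_m} |
          [&& bg.1 \subset Eef, bg.2 \subset Eef & [disjoint bg.1 & bg.2]])
     xmon bg.1 * xmon bg.2 * \sum_(mu <- Bset bg.1 bg.2) mu.

End Graph.

Definition deg_le2 (m : nat) (p : {mpoly int[m]}) : Prop :=
  forall mu : 'X_{1..m}, mu \in msupp p -> forall i : 'I_m, (mu i <= 2)%N.

(* Factoring x^A out of T_A^B leaves a polynomial in q whose value at q = 1 is
   the sum of x^F over all F ⊆ E^{ef}, whatever the split (A, B) of {e, f}.
   Hence the numerator of M_ef is x_e x_f N with N(1) = 0, so N = (q - 1) Q and
   M_ef = -Q.  Every coefficient of N is an integer combination of products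
   x^F x^G of two squarefree monomials; the coefficients of Q are partial sums
   of those of N, so M_ef(1) = -Q(1) is such a combination as well.  In the
   second sum every monomial is x^beta x^gamma x^alpha x^alpha' with
   beta, gamma, alpha pairwise disjoint, i.e. the product of the two
   squarefree monomials x^(beta ∪ gamma ∪ alpha) and x^alpha'. *)

From HB Require Import structures.
From mathcomp Require Import all_boot all_order all_algebra.
From mathcomp Require Import mpoly ring.
Import GRing.Theory.
Set Implicit Arguments. Unset Strict Implicit. Unset Printing Implicit Defensive.
Local Open Scope ring_scope.

Definition var_deg_le (R : nzRingType) (m n : nat) : {pred {mpoly R[m]}} :=
  [pred p | all (fun mu : 'X_{1..m} => [forall i, mu i <= n]%N) (msupp p)].

Lemma var_deg_leP (R : nzRingType) (m n : nat) (p : {mpoly R[m]}) :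
  reflect (forall mu, mu \in msupp p -> forall i, (mu i <= n)%N)
          (p \in var_deg_le n).
Proof.
by apply: (iffP allP) => h mu /h; [move/forallP | move=> hi; apply/forallP].
Qed.

Fact var_deg_le_zmod_closed (R : nzRingType) (m n : nat) :
  zmod_closed (@var_deg_le R m n).
Proof.
split=> [|p q /var_deg_leP hp /var_deg_leP hq]; apply/var_deg_leP => mu.
  by rewrite msupp0.
move=> /msuppD_le; rewrite mem_cat (perm_mem (msuppN q)).
by case/orP=> [/hp|/hq].
Qed.

HB.instance Definition _ (R : nzRingType) (m n : nat) :=
  GRing.isZmodClosed.Build _ (@var_deg_le R m n) (var_deg_le_zmod_closed R m n).

Lemma big_setD_supset (R : Type) (idx : R) (op : Monoid.com_law idx)
    (T : finType) (A B : {set T}) (h : {set T} -> R) :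
  [disjoint A & B] ->
  \big[op/idx]_(F : {set T} | (A \subset F) && [disjoint F & B]) h (F :\: A)
    = \big[op/idx]_(G : {set T} | G \subset ~: (A :|: B)) h G.
Proof.
move=> AB; rewrite (reindex_onto (setU A) (fun F => F :\: A)) => [|F /andP[AF _]].
  apply: eq_big => [G|G /andP[_ /eqP->] //].
  rewrite subsetUl setDUl setDv set0U /= setCU subsetI -!disjoints_subset.
  rewrite [X in X && _]disjoints_subset subUset -!disjoints_subset AB andbC.
  by rewrite (sameP eqP setDidPl).
by rewrite setDE setUIr setUCr setIT; apply/setUidPr.
Qed.

Section CoefClosed.
Variables (R : nzRingType) (S : zmodClosed R).

Lemma coef_mulXsub1_rpred (Q : {poly R}) :
  (forall k, (Q * ('X - 1))`_k \in S) -> forall k, Q`_k \in S.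
Proof.
move=> SN; have coefQ k : Q`_k = (Q * 'X)`_k - (Q * ('X - 1))`_k.
  by rewrite mulrBr mulr1 coefB opprB addrC subrK.
by elim=> [|k IHk]; rewrite coefQ coefMX /= rpredB ?rpred0.
Qed.

Lemma horner1_rpred (p : {poly R}) : (forall k, p`_k \in S) -> p.[1] \in S.
Proof.
by move=> Sp; rewrite horner_coef rpred_sum // => i _; rewrite expr1n mulr1.
Qed.

End CoefClosed.

Lemma horner_mulB_eq (R : comNzRingType) (p1 p2 p3 p4 : {poly R}) x :
  p1.[x] = p3.[x] -> p2.[x] = p4.[x] -> (p1 * p2 - p3 * p4).[x] = 0.
Proof. by move=> h13 h24; rewrite hornerD hornerN !hornerM h13 h24 subrr. Qed.

Section SetMonomials.
Variable m : nat.
Implicit Types A F G : {set 'I_m}.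

Definition mnm_of_set F : 'X_{1..m} := (\sum_(g in F) U_(g))%MM.

Lemma mnm_of_setE F i : mnm_of_set F i = (i \in F).
Proof.
rewrite mnm_sumE; case: (boolP (i \in F)) => iF.
  rewrite (bigD1 i) //= mnm1E eqxx big1 // => g /andP[_ /negbTE].
  by rewrite mnm1E => ->.
by rewrite big1 // => g gF; rewrite mnm1E; case: eqP => // eg; rewrite -eg gF in iF.
Qed.

Lemma xmonE F : xmon F = 'X_[mnm_of_set F].
Proof. by rewrite /xmon mprodXE. Qed.

Lemma xmon_neq0 F : xmon F != 0.
Proof. by rewrite xmonE -msupp_eq0 msuppX. Qed.

Lemma xmonD A F : A \subset F -> xmon F = xmon A * xmon (F :\: A).
Proof. by move=> AF; rewrite /xmon (big_setID A) /= (setIidPr AF). Qed.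

Lemma xmonU F G : [disjoint F & G] -> xmon (F :|: G) = xmon F * xmon G.
Proof. by move=> FG; rewrite /xmon -bigU //; apply: eq_bigl => g; rewrite inE. Qed.

Lemma xmonM_var_deg_le2 F G : xmon F * xmon G \in var_deg_le 2.
Proof.
apply/var_deg_leP => mu; rewrite !xmonE -mpolyXD msuppX inE => /eqP -> i.
by rewrite mnmDE !mnm_of_setE; case: (i \in F); case: (i \in G).
Qed.

End SetMonomials.

Section Reduction.
Variables (V : finType) (m : nat) (ends : 'I_m -> V * V) (e f : 'I_m).
Hypothesis nef : e != f.
Implicit Types A B C D : {set 'I_m}.

Definition Tred A B : {poly {mpoly int[m]}} :=
  \sum_(F : {set 'I_m} | (A \subset F) && [disjoint F & B])
     (xmon (F :\: A))%:P * 'X ^+ kcomp ends F.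

Definition Nred : {poly {mpoly int[m]}} :=
  Tred [set e] [set f] * Tred [set f] [set e]
  - Tred [set e; f] set0 * Tred set0 [set e; f].

Lemma Tpoly_Tred A B : Tpoly ends A B = (xmon A)%:P * Tred A B.
Proof.
rewrite /Tpoly /Tred mulr_sumr; apply: eq_bigr => F /andP[AF _].
by rewrite (xmonD AF) polyCM mulrA.
Qed.

Lemma Mnum_Nred : Mnum ends e f = (xmon [set e] * xmon [set f])%:P * Nred.
Proof.
have ef : [disjoint [set e] & [set f]] by rewrite disjoints1 inE.
rewrite /Mnum /Nred !Tpoly_Tred xmonU // [xmon set0]big_set0 polyC1 polyCM.
(* Abstracting the factors keeps unification from unfolding the sums [Tred]. *)
move: (Tred [set e] [set f]) (Tred [set f] [set e]) (Tred [set e; f] set0)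
  (Tred set0 [set e; f]) => t1 t2 t3 t4.
ring.
Qed.

Lemma Tred_horner1 A B : [disjoint A & B] -> A :|: B = [set e; f] ->
  (Tred A B).[1] = \sum_(G : {set 'I_m} | G \subset Eef e f) xmon G.
Proof.
move=> AB ABef; rewrite horner_sum /Eef -ABef -big_setD_supset //.
by apply: eq_bigr => F _; rewrite hornerCM hornerXn expr1n mulr1.
Qed.

Lemma Nred_horner1 : Nred.[1] = 0.
Proof.
have ef : [disjoint [set e] & [set f]] by rewrite disjoints1 inE.
have fe : [disjoint [set f] & [set e]] by rewrite disjoint_sym.
have ef0 : [disjoint [set e; f] & set0] by rewrite disjoints_subset setC0 subsetT.
have e0f : [disjoint set0 & [set e; f]] by rewrite disjoint_sym.
move: (Tred_horner1 ef erefl) (Tred_horner1 fe (setUC _ _)).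
move: (Tred_horner1 ef0 (setU0 _)) (Tred_horner1 e0f (set0U _)).
rewrite /Nred; move: (Tred _ _) (Tred _ _) (Tred _ _) (Tred _ _) => ????.
by move=> h3 h4 h1 h2; apply: horner_mulB_eq; rewrite ?h1 ?h2 ?h3 ?h4.
Qed.

Lemma coef_TredM_var_deg_le2 A B C D k :
  (Tred A B * Tred C D)`_k \in var_deg_le 2.
Proof.
rewrite /Tred mulr_suml coef_sum rpred_sum // => F _.
rewrite mulr_sumr coef_sum rpred_sum // => G _.
by rewrite mulrACA -polyCM -exprD coefCM coefXn mulr_natr rpredMn ?xmonM_var_deg_le2.
Qed.

Lemma coef_Nred_var_deg_le2 k : Nred`_k \in var_deg_le 2.
Proof. by rewrite coefB rpredB ?coef_TredM_var_deg_le2. Qed.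

End Reduction.

Lemma Bsum_var_deg_le2 (V : finType) (m : nat) (ends : 'I_m -> V * V) (e f : 'I_m) :
  Bsum ends e f \in var_deg_le 2.
Proof.
rewrite /Bsum rpred_sum // => -[b c] /and3P[_ _ bc] /=.
rewrite big_seq mulr_sumr rpred_sum // => mu /[!mem_undup] /mapP[[a a']].
rewrite mem_enum inE => /and3P[/and5P[_ ab ac _ _] _ _] -> /=.
have bca : [disjoint b :|: c & a].
  by rewrite disjoints_subset subUset -!disjoints_subset !(disjoint_sym _ a) ab ac.
by rewrite -xmonU // mulrA -xmonU // xmonM_var_deg_le2.
Qed.

Theorem lemma4p1 (V : finType) (m : nat) (ends : 'I_m -> V * V) (e f : 'I_m) :
  e != f ->
  ((exists P : {poly {mpoly int[m]}},
      Mnum ends e f = (xmon [set e] * xmon [set f])%:P * (1 - 'X) * P)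
   /\ (forall P : {poly {mpoly int[m]}},
         Mnum ends e f = (xmon [set e] * xmon [set f])%:P * (1 - 'X) * P ->
         deg_le2 P.[1]))
  /\ deg_le2 (Bsum ends e f).
Proof.
move=> nef; set c := xmon [set e] * xmon [set f].
have /factor_theorem[Q NQ] : root (Nred ends e f) 1 by rewrite /root Nred_horner1.
have MQ : Mnum ends e f = c%:P * (1 - 'X) * - Q.
  by rewrite Mnum_Nred // NQ polyC1 -mulrA mulrN -mulNr opprB [_ * Q]mulrC.
have Q1 : Q.[1] \in var_deg_le 2.
  apply: horner1_rpred; apply: coef_mulXsub1_rpred => k.
  by rewrite -polyC1 -NQ coef_Nred_var_deg_le2.
have cX_neq0 : c%:P * (1 - 'X) != 0.
  by rewrite mulf_neq0 ?polyC_eq0 ?mulf_neq0 ?xmon_neq0 // -opprB oppr_eq0 -polyC1 polyXsubC_eq0.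
split; last exact/var_deg_leP/Bsum_var_deg_le2.
split=> [|P MP]; first by exists (- Q).
have -> : P = - Q by apply: (mulfI cX_neq0); rewrite -MP -MQ.
by apply/var_deg_leP; rewrite hornerN rpredN.
Qed.
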